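(* Let $n>1$, let $\mathcal{X}=\{-1,1\}^n$, and let $\mathcal{P}\subseteq[0,1]$ be a Lebesgue measurable set with Lebesgue measure $\mu(\mathcal{P})>0$. Let $\mathcal{K}$ be the set of admissible controllers, i.e. maps $K:\mathcal{X}\to\mathbb{R}^n$, $X=(X_0,\dots,X_{n-1})\mapsto (K_0(X),\dots,K_{n-1}(X))$, such that for each $k$ the value $K_k(X)$ depends only on $X_0,\dots,X_{k-1}$, and $|K_k(X)|\leq 1$ for all $X,k$. For $K\in\mathcal{K}$ and $p\in[0,1]$ let \[ ELG_K(p)\doteq\frac{1}{n}\sum_{X\in\mathcal{X}}p^{n_h(X)}(1-p)^{n-n_h(X)}\sum_{k=0}^{n-1}\log\bigl(1+K_k(X)X_k\bigr), \] where $n_h(X)=\#\{i:X_i=1\}$, with conventions $\log 0=-\infty$, $0\cdot(-\infty)=0$. Let $K^*\in\mathcal{K}$ be the controller \[ K_k^*(X)=\frac{\int_{p\in\mathcal{P}}p^{q_k}(1-p)^{k-q_k}(2p-1)\,dp}{\int_{p\in\mathcal{P}}p^{q_k}(1-p)^{k-q_k}\,dp},\qquad q_k=\#\{i\in\{0,\dots,k-1\}:X_i=1\}, \] (the unique maximizer of $K\mapsto\int_{\mathcal{P}}ELG_K(p)\,dp$ over $\mathcal{K}$), and let $K_0^*$ denote the static linear controller with constant gain $K_0^*=2\bar p-1$ at every stage and every sample path, where $\bar p=\frac{1}{\mu(\mathcal{P})}\int_{\mathcal{P}}p\,dp$ (the optimal static linear controller). Then \[ \int_{p\in\mathcal{P}}ELG_{K^*}(p)\,dp\;>\;\int_{p\in\mathcal{P}}ELG_{K_0^*}(p)\,dp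 . \]
   Context: Interpretation: $n$ flips of a coin with unknown probability of heads $p\in\mathcal{P}$ and even-money payoff; $X_k=1$ is heads, $X_k=-1$ tails; the bet at stage $k$ is $K_k(X)V_k$ and wealth evolves as $V_{k+1}=(1+K_k(X)X_k)V_k$, so $ELG_K(p)=\frac1n\mathbb{E}\log(V_n/V_0)$. A static linear controller is one with $K_k(X)\equiv K_0$ constant for all $k$ and $X$. *)

From mathcomp Require Import all_boot all_order all_algebra.
From mathcomp Require Import all_classical all_reals all_analysis.

Set Implicit Arguments.
Unset Strict Implicit.
Unset Printing Implicit Defensive.

Import Order.TTheory GRing.Theory Num.Theory.
Local Open Scope classical_set_scope.
Local Open Scope ring_scope.

(* Stage k in 'I_n ; a sample path X = (X_0,...,X_{n-1}) in {-1,1}^n is encoded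
   as a finite function 'I_n -> bool, with [true] = heads (+1), [false] = tails (-1). *)
Definition path (n : nat) := {ffun 'I_n -> bool}.

Section Defs.
Variable R : realType.

Definition lmu : set R -> \bar R := @completed_lebesgue_measure R.

Definition lmeasurable (A : set R) : Prop :=
  @measurable _ (caratheodory_type (R:=R) (@wlength R idfun)^*%mu) A.

Definition lint (A : set R) (f : R -> \bar R) : \bar R :=
  \int[@completed_lebesgue_measure R]_(x in A) f x.

Definition sgnb (b : bool) : R := if b then 1 else -1.

Definition controller (n : nat) := path n -> 'I_n -> R.

(* admissible controllers (not needed in the statement; for reference) *)
Definition admissible (n : nat) (K : controller n) : Prop :=
  (forall (X Y : path n) (k : 'I_n), (forall i : 'I_n, (i < k)%N -> X i = Y i) -> K X k = K Y k) /\
  (forall (X : path n) (k : 'I_n), `|K X k| <= 1).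

Definition nh (n : nat) (X : path n) : nat := #|[set i | X i]|.

Definition qk (n : nat) (X : path n) (k : 'I_n) : nat :=
  #|[set i : 'I_n | (i < k)%N && X i]|.

(* log with the convention log 0 = -oo (the argument is >= 0 for admissible K) *)
Definition logE (x : R) : \bar R := if 0 < x then (ln x)%:E else -oo%E.

(* expected log growth; in \bar R, 0 * -oo = 0 holds by the library convention *)
Definition ELG (n : nat) (K : controller n) (p : R) : \bar R :=
  ((n%:R)^-1)%:E *
  (\sum_(X : path n)
     ((p ^+ nh X * (1 - p) ^+ (n - nh X))%:E *
      \sum_(k < n) logE (1 + K X k * sgnb (X k))))%E.

Definition Kstar (n : nat) (P : set R) : controller n :=
  fun X k =>
    let q := qk X k in
    fine (lint P (fun p => (p ^+ q * (1 - p) ^+ (k - q) * (2 * p - 1))%:E)) /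
    fine (lint P (fun p => (p ^+ q * (1 - p) ^+ (k - q))%:E)).

Definition pbar (P : set R) : R :=
  fine (lint P (fun p => p%:E)) / fine (lmu P).

Definition static_ctrl (n : nat) (c : R) : controller n := fun _ _ => c.

End Defs.

From Pilot Require Import Defs.
From mathcomp Require Import all_boot all_order all_algebra.
From mathcomp Require Import all_classical all_reals all_analysis.
From mathcomp Require Import measurable_realfun lra ring.
Import Order.TTheory GRing.Theory Num.Theory.
Local Open Scope classical_set_scope.
Local Open Scope ring_scope.

(* Averaging ELG over P turns every stage into a single bet.  Summing out the
   coins after stage k and integrating over p, stage k along a past with q heads
   contributes A ln(1 + K) + B ln(1 - K), with the positive weights
   A = \int_P p^(q+1) (1-p)^(k-q) and B = \int_P p^q (1-p)^(k-q+1).  By Gibbs'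
   inequality this is maximal exactly at the Kelly fraction (A - B)/(A + B),
   which is the value of K^*; the static gain 2 pbar - 1 is that fraction at
   stage 0 only.  At stage 1, K^* after a head differs from K^* after a tail by
   the strict Cauchy-Schwarz inequality
   (\int_P p(1-p))^2 < \int_P p^2 \int_P (1-p)^2, so the constant gain is
   strictly suboptimal on some past of length 1. *)

Lemma ltr_le_sum (R : numDomainType) (I : finType) (Q : pred I) (F G : I -> R) i0 :
  Q i0 -> (forall i, Q i -> F i <= G i) -> F i0 < G i0 ->
  \sum_(i | Q i) F i < \sum_(i | Q i) G i.
Proof.
move=> Qi0 FG FGi0; rewrite (bigD1 i0) //= [ltRHS](bigD1 i0) //=.
by rewrite ltr_leD // ler_sum // => i /andP[Qi _]; exact: FG.
Qed.

Section kelly.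
Context {R : realType}.
Implicit Types A B c x : R.

Lemma ln_le_subr1 x : 0 < x -> ln x <= x - 1.
Proof. by move=> x0; have := expR_ge1Dx (ln x); rewrite lnK ?posrE //; lra. Qed.

Lemma ln_lt_subr1 x : 0 < x -> x != 1 -> ln x < x - 1.
Proof.
move=> x0 x1; have lnx0 : ln x != 0 by rewrite ln_eq0.
by have := expR_gt1Dx lnx0; rewrite lnK ?posrE //; lra.
Qed.

Definition log_gain A B x := A * ln (1 + x) + B * ln (1 - x).

Definition kelly A B := (A - B) / (A + B).

Section positive_weights.
Variables A B : R.
Hypotheses (A_gt0 : 0 < A) (B_gt0 : 0 < B).

Lemma add1_kelly : 1 + kelly A B = 2 * A / (A + B).
Proof. by rewrite /kelly; field; rewrite gt_eqF ?addr_gt0. Qed.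

Lemma sub1_kelly : 1 - kelly A B = 2 * B / (A + B).
Proof. by rewrite /kelly; field; rewrite gt_eqF ?addr_gt0. Qed.

Lemma kelly_bounds : -1 < kelly A B < 1.
Proof.
have AB : 0 < A + B by rewrite addr_gt0.
have := add1_kelly; have := sub1_kelly.
have : 0 < 2 * A / (A + B) by rewrite divr_gt0 ?mulr_gt0.
have : 0 < 2 * B / (A + B) by rewrite divr_gt0 ?mulr_gt0.
lra.
Qed.

Lemma log_gain_sub_kelly c : -1 < c < 1 ->
  log_gain A B c - log_gain A B (kelly A B) =
  A * ln ((1 + c) / (1 + kelly A B)) + B * ln ((1 - c) / (1 - kelly A B)).
Proof.
move=> c1; have [k1 k2] := andP kelly_bounds.
by rewrite /log_gain !ln_div ?posrE; lra.
Qed.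

Lemma kelly_tangent_sum c :
  A * ((1 + c) / (1 + kelly A B) - 1) + B * ((1 - c) / (1 - kelly A B) - 1) = 0.
Proof. by rewrite add1_kelly sub1_kelly; field; rewrite !gt_eqF ?addr_gt0. Qed.

(* Gibbs' inequality for a single bet: bound each logarithm by its tangent
   [ln y <= y - 1]; the weighted tangent terms cancel exactly at [kelly A B]. *)
Lemma log_gain_le_kelly c : -1 < c < 1 ->
  log_gain A B c <= log_gain A B (kelly A B).
Proof.
move=> c1; have [k1 k2] := andP kelly_bounds.
rewrite -subr_le0 log_gain_sub_kelly // -(kelly_tangent_sum c).
by apply: lerD; rewrite ler_pM2l // ln_le_subr1 // divr_gt0 //; lra.
Qed.

Lemma log_gain_lt_kelly c : -1 < c < 1 -> c != kelly A B ->
  log_gain A B c < log_gain A B (kelly A B).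
Proof.
move=> c1 ck; have [k1 k2] := andP kelly_bounds.
rewrite -subr_lt0 log_gain_sub_kelly // -(kelly_tangent_sum c).
apply: ltr_leD; rewrite ?ltr_pM2l ?ler_pM2l //.
  apply: ln_lt_subr1; first by rewrite divr_gt0 //; lra.
  by apply: contra ck => /eqP/divr1_eq ck; apply/eqP; lra.
by rewrite ln_le_subr1 // divr_gt0 //; lra.
Qed.

Lemma eq_kelly A' B' : 0 < A' -> 0 < B' ->
  (kelly A B == kelly A' B') = (A * B' == A' * B).
Proof.
move=> A'_gt0 B'_gt0.
have AB0 : A + B != 0 by rewrite gt_eqF ?addr_gt0.
have AB0' : A' + B' != 0 by rewrite gt_eqF ?addr_gt0.
rewrite /kelly eqr_div //.
have -> : (A - B) * (A' + B') = (A' - B') * (A + B) + 2 * (A * B' - A' * B) by ring.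
by rewrite -subr_eq0 addrAC subrr add0r mulf_eq0 pnatr_eq0 /= subr_eq0.
Qed.

End positive_weights.
End kelly.

Lemma card_set_pred (T : finType) (f : pred T) : #|[set x | f x]| = #|[pred x | f x]|.
Proof. by apply: eq_card => x; apply/idP/idP => [/set_mem|/mem_set]. Qed.

Section paths.
Context {R : comPzRingType} {n : nat}.
Implicit Types (X Z : Defs.path n) (p : R).

Definition wt p (b : bool) : R := if b then p else 1 - p.

Definition bern (a b : nat) p : R := p ^+ a * (1 - p) ^+ b.

Lemma wt_bern p (b : bool) a c : wt p b * bern a c p = bern (a + b) (c + ~~ b) p.
Proof. by case: b; rewrite /wt /bern !addn0 !addn1 !exprS; ring. Qed.

Lemma prod_wt (A : {pred 'I_n}) X p :
  \prod_(i in A) wt p (X i) =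
  bern #|[pred i in A | X i]| #|[pred i in A | ~~ X i]| p.
Proof.
rewrite (bigID X) /= /bern -!prodr_const.
by congr (_ * _); apply: eq_big => [i|i /andP[_]]; rewrite ?inE /wt //; case: (X i).
Qed.

Lemma prod_wtE X p : \prod_i wt p (X i) = p ^+ nh X * (1 - p) ^+ (n - nh X).
Proof.
rewrite (eq_bigl (mem predT)) // prod_wt /nh card_set_pred.
have := cardC [pred i | X i]; rewrite card_ord => cardE.
rewrite -[m in (m - _)%N]cardE addKn.
by congr bern; apply: eq_card => i; rewrite !inE.
Qed.

(* The information available before stage [k]: the first [k] coins of [X],
   all later coins set to tails. *)
Definition past (k : nat) X : Defs.path n := [ffun i : 'I_n => (i < k)%N && X i].

Lemma pastK k X : past k (past k X) = past k X.
Proof. by apply/ffunP => i; rewrite !ffunE andbA andbb. Qed.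

Lemma qk_past (k : 'I_n) X : qk (past k X) k = qk X k.
Proof.
by rewrite /qk !card_set_pred; apply: eq_card => i; rewrite !inE ffunE andbA andbb.
Qed.

Lemma card_ord_lt (k : nat) : (k <= n)%N -> #|[pred i : 'I_n | (i < k)%N]| = k.
Proof.
move=> kn; rewrite -sum1_card (eq_bigl (fun i : 'I_n => (i < k)%N)) //.
by rewrite -(big_ord_widen _ (fun _ => 1%N) kn) sum1_card card_ord.
Qed.

Lemma prod_wt_past (k : 'I_n) Z p :
  \prod_(i < n | (i < k)%N) wt p (Z i) = bern (qk Z k) (k - qk Z k) p.
Proof.
have qkE : #|[pred i : 'I_n | (i < k)%N & Z i]| = qk Z k.
  by rewrite /qk card_set_pred.
rewrite (prod_wt [pred i : 'I_n | (i < k)%N]) qkE; congr bern.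
rewrite -[m in (m - _)%N](card_ord_lt _ (ltnW (ltn_ord k))) -qkE.
rewrite -(cardID [pred i | Z i] [pred i : 'I_n | (i < k)%N]) addKn.
by apply: eq_card => i; rewrite !inE andbC.
Qed.

Lemma natr_eq_ffun (T : finType) (U : eqType) (f g : {ffun T -> U}) :
  ((f == g)%:R : R) = \prod_i (f i == g i)%:R.
Proof.
have [->|fg] := eqVneq f g; first by rewrite big1 // => i _; rewrite eqxx.
have [i /negPf fgi] : exists i, f i != g i.
  apply/existsP; apply: contraNT fg => /existsPn fg.
  by apply/eqP/ffunP => i; apply/eqP/negPn/fg.
by rewrite (bigD1 i) //= fgi mul0r.
Qed.

Lemma sum_wt_past_eq (k : 'I_n) Z b p : past k Z = Z ->
  \sum_X ((past k X == Z) && (X k == b))%:R * \prod_i wt p (X i) =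
  wt p b * \prod_(i < n | (i < k)%N) wt p (Z i).
Proof.
move=> pastZ; have Z_future (i : 'I_n) : (k <= i)%N -> Z i = false.
  by move=> ki; rewrite -pastZ ffunE ltnNge ki.
(* Both indicators factor over the coins, so the sum over all paths is a
   product of one-coin sums. *)
pose F (i : 'I_n) c := wt p c *
  ((((i < k)%N && c) == Z i)%:R * (if i == k then (c == b)%:R else 1)).
have summandE X :
    ((past k X == Z) && (X k == b))%:R * \prod_i wt p (X i) = \prod_i F i (X i).
  have indk : ((X k == b)%:R : R) = \prod_i (if i == k then (X i == b)%:R else 1).
    by rewrite -big_mkcond big_pred1_eq.
  rewrite !big_split /= mulrC -mulnb natrM natr_eq_ffun indk.
  by congr (_ * (_ * _)); apply: eq_bigr => i _; rewrite ffunE.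
have factorE i : \sum_c F i c =
    if i == k then wt p b else if (i < k)%N then wt p (Z i) else 1.
  rewrite big_bool /F; have [->|ik] := eqVneq i k.
    by rewrite ltnn Z_future // eqxx; case: b {F summandE}; rewrite /wt /=; ring.
  case: ltnP => [_|ki]; last by rewrite Z_future // /wt /=; ring.
  by case: (Z i); rewrite /wt /=; ring.
under eq_bigr do rewrite summandE.
rewrite -bigA_distr_bigA (eq_bigr _ (fun i _ => factorE i)) (bigD1 k) //= eqxx.
congr (_ * _); rewrite big_mkcond [RHS]big_mkcond; apply: eq_bigr => i _.
by case: eqP => [->|]; rewrite ?ltnn.
Qed.

Lemma sum_wt_past (k : 'I_n) (f : bool -> Defs.path n -> R) p :
  \sum_(X : Defs.path n) (\prod_i wt p (X i)) * f (X k) (past k X) =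
  \sum_(Z | past k Z == Z) \sum_b
    wt p b * (\prod_(i < n | (i < k)%N) wt p (Z i)) * f b Z.
Proof.
transitivity (\sum_X \sum_(Z | past k Z == Z) \sum_b
    ((past k X == Z) && (X k == b))%:R * (\prod_i wt p (X i)) * f b Z).
  apply: eq_bigr => X _; rewrite (bigD1 (past k X)) ?pastK //= [X in _ + X]big1 ?addr0.
    by rewrite big_bool eqxx; case: (X k); rewrite /= !mul1r !mul0r ?addr0 ?add0r.
  move=> Z /andP[_ /negPf XZ]; apply: big1 => b _.
  by rewrite eq_sym XZ !mul0r.
rewrite exchange_big; apply: eq_bigr => Z /eqP pastZ.
rewrite exchange_big; apply: eq_bigr => b _.
by rewrite -mulr_suml sum_wt_past_eq.
Qed.

End paths.

Section Rintegral_sum.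
Context {d} {T : measurableType d} {R : realType}.
Context {mu : {measure set T -> \bar R}} {D : set T}.
Hypothesis mD : measurable D.

Lemma integrable_Rsum (I : Type) (s : seq I) (Q : pred I) (F : I -> T -> R) :
  (forall i, mu.-integrable D (EFin \o F i)) ->
  mu.-integrable D (EFin \o (fun x => \sum_(i <- s | Q i) F i x)).
Proof.
move=> iF; rewrite (_ : _ \o _ = fun x => \sum_(i <- s | Q i) (F i x)%:E).
  by apply: (integrable_sum mD) => i _; exact: iF.
by apply/funext => x; rewrite /= sumEFin.
Qed.

Lemma Rintegral_sum (I : Type) (s : seq I) (Q : pred I) (F : I -> T -> R) :
  (forall i, mu.-integrable D (EFin \o F i)) ->
  \int[mu]_(x in D) (\sum_(i <- s | Q i) F i x) =
  \sum_(i <- s | Q i) \int[mu]_(x in D) F i x.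
Proof.
move=> iF; rewrite /Rintegral; under eq_integral do rewrite -sumEFin.
by rewrite integral_sum // sum_fine // => i _; exact/(integrable_fin_num mD)/iF.
Qed.

Lemma EFin_Rintegral (f : T -> R) : mu.-integrable D (EFin \o f) ->
  (\int[mu]_(x in D) f x)%:E = (\int[mu]_(x in D) (f x)%:E)%E.
Proof. by move/(integrable_fin_num mD)/fineK. Qed.

End Rintegral_sum.

Section moments.
Variables (R : realType) (P : set R).
Hypotheses (mP : lmeasurable P) (P01 : P `<=` `[0, 1]) (P_gt0 : (0 < lmu P)%E).
Local Notation mu := (@completed_lebesgue_measure R).
Let T := caratheodory_type (R:=R) (@wlength R idfun)^*%mu.

Let mPT : measurable (P : set T). Proof. exact: mP. Qed.

Lemma lmu_lty : (mu P < +oo)%E.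
Proof.
have m01 : measurable (`[0, 1]%classic : set T).
  by apply: sub_caratheodory; exact: measurable_itv.
have /le_lt_trans -> // := le_measure mu (mem_set mPT) (mem_set m01) P01.
change (@lebesgue_measure R `[0%R, 1%R]%classic < +oo)%E.
by rewrite lebesgue_measure_itv /= lte_fin ltr01 -EFinD subr0 ltry.
Qed.

Lemma measurable_bern a b : measurable_fun (P : set T) (bern a b : T -> R).
Proof.
have mid : measurable_fun (P : set T) (id : T -> R).
  by move=> _ Y mY; apply: measurableI => //; exact: sub_caratheodory.
apply: measurable_funM; apply: measurable_funX => //.
exact: measurable_funB (measurable_cst _) mid.
Qed.

Lemma bern_ge0 a b (x : R) : 0 <= x <= 1 -> 0 <= bern a b x.
Proof. by move=> /andP[x0 x1]; rewrite mulr_ge0 // exprn_ge0 // subr_ge0. Qed.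

Lemma bern_le1 a b (x : R) : 0 <= x <= 1 -> bern a b x <= 1.
Proof.
move=> /andP[x0 x1]; rewrite mulr_ile1 ?exprn_ge0 ?exprn_ile1 ?subr_ge0 //.
by rewrite lerBlDr lerDl.
Qed.

Lemma in01 x : P x -> 0 <= x <= 1.
Proof. by move=> /P01; rewrite /= in_itv. Qed.

Lemma integrable_bern a b : mu.-integrable (P : set T) (EFin \o bern a b).
Proof.
apply: measurable_bounded_integrable => //; [exact: lmu_lty|exact: measurable_bern|].
exists 1; split => // y y1 x /in01 x01.
by rewrite /= ger0_norm ?bern_ge0 // (le_trans (bern_le1 _ _ _ x01)) // ltW.
Qed.

Lemma Rintegral_gt0 (f : R -> R) : mu.-integrable (P : set T) (EFin \o f) ->
  (forall x, P x -> 0 <= f x) -> countable (P `&` [set x | f x = 0]) ->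
  0 < \int[mu]_(x in P) f x.
Proof.
move=> intf f0 cZ; rewrite lt_def Rintegral_ge0 // andbT; apply/eqP => If0.
have mf : measurable_fun (P : set T) (EFin \o f) := measurable_int _ intf.
have abs0 : (\int[mu]_(x in P) `|(EFin \o f) x| = 0)%E.
  rewrite -[RHS]/(0%R%:E) -If0 EFin_Rintegral //; apply: eq_integral => x /set_mem Px.
  by rewrite gee0_abs // lee_fin f0.
have ae0 := (ae_eq_integral_abs mu mPT mf).1 abs0.
have Zneg : mu.-negligible (P `&` [set x | f x = 0]).
  apply/negligibleP; last exact: countable_lebesgue_measure0.
  by have /measurable_EFinP mfR := mf; exact: mfR mPT _ (measurable_set1 0).
suff /negligibleP : mu.-negligible (P : set T).
  by move=> /(_ mPT) P0; move: P_gt0; rewrite /lmu P0 ltxx.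
apply: negligibleS (negligibleU ae0 Zneg) => x Px.
have [fx0|fx0] := eqVneq (f x) 0; [by right|left => /(_ Px) /= /eqP].
by rewrite eqe (negPf fx0).
Qed.

Definition moment a b := \int[mu]_(p in P) bern a b p.

Lemma integrable_bernM c a b :
  mu.-integrable (P : set T) (EFin \o (fun p => bern a b p * c)).
Proof. exact: integrableZr (integrable_bern a b). Qed.

Lemma Rintegral_bernM c a b : \int[mu]_(p in P) (bern a b p * c) = moment a b * c.
Proof. exact: RintegralZr mP (integrable_bern a b). Qed.

Lemma moment_gt0 a b : 0 < moment a b.
Proof.
apply: Rintegral_gt0; [exact: integrable_bern|by move=> x /in01; exact: bern_ge0|].
apply: sub_countable (finite_set_countable (finite_set2 0 1)).
apply: subset_card_le => x [_ /eqP]; rewrite /bern mulf_eq0 !expf_eq0 subr_eq0.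
by case/orP => /andP[_ /eqP x01]; [left|right].
Qed.

Lemma momentD a b : moment a b = moment a.+1 b + moment a b.+1.
Proof.
rewrite /moment -RintegralD //; try exact: integrable_bern.
by apply: eq_Rintegral => p _; rewrite /bern !exprS; ring.
Qed.

Lemma moment00 : fine (lmu P) = moment 0 0.
Proof.
rewrite /moment (@eq_Rintegral _ _ _ mu _ (fun=> 1)).
  by rewrite Rintegral_cst // mul1r.
by move=> p _; rewrite /bern !expr0 mulr1.
Qed.

Lemma moment_cauchy_schwarz : moment 1 1 ^+ 2 < moment 2 0 * moment 0 2.
Proof.
pose a := moment 1 1; pose b := moment 2 0.
have a_gt0 : 0 < a := moment_gt0 1 1; have b_gt0 : 0 < b := moment_gt0 2 0.
pose s : seq (nat * nat * R) :=
  [:: (0, 2, b ^+ 2); (1, 1, - (2 * a * b)); (2, 0, a ^+ 2)]%N.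
have sqE p : (b * (1 - p) - a * p) ^+ 2 = \sum_(t <- s) bern t.1.1 t.1.2 p * t.2.
  by rewrite !big_cons big_nil /bern /=; ring.
(* The integral below equals [b * (b * moment 0 2 - a ^+ 2)]. *)
have : 0 < \int[mu]_(p in P) (b * (1 - p) - a * p) ^+ 2.
  apply: Rintegral_gt0 => [|x _|].
  - rewrite (_ : _ \o _ = EFin \o (fun p => \sum_(t <- s) bern t.1.1 t.1.2 p * t.2)).
      by apply: integrable_Rsum => // t; exact: integrable_bernM.
    by apply/funext => p; rewrite /= sqE.
  - by rewrite sqr_ge0.
  - apply: sub_countable (countable1 (b / (a + b))); apply: subset_card_le.
    move=> x [_ /= /eqP]; rewrite sqrf_eq0 subr_eq0 => /eqP abx.
    have ab0 : a + b != 0 by rewrite gt_eqF ?addr_gt0.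
    by apply: (mulIf ab0); rewrite divfK //; lra.
rewrite (@eq_Rintegral _ _ _ mu _ (fun p => \sum_(t <- s) bern t.1.1 t.1.2 p * t.2)).
  rewrite Rintegral_sum //; last by move=> t; exact: integrable_bernM.
  rewrite !big_cons big_nil /= !Rintegral_bernM -/a -/b => h.
  have : 0 < b * (b * moment 0 2 - a ^+ 2) by move: h; nra.
  by rewrite pmulr_rgt0 // subr_gt0.
by move=> p _; exact: sqE.
Qed.

Section growth.
Variable n : nat.
Implicit Types (K : controller R n) (X Z : Defs.path n).

Definition causal K := forall X (k : 'I_n), K (past k X) k = K X k.

Definition stage_gain K (k : 'I_n) Z :=
  log_gain (moment (qk Z k).+1 (k - qk Z k)) (moment (qk Z k) (k - qk Z k).+1) (K Z k).

Lemma ELG_pastE K p : causal K -> (forall X k, -1 < K X k < 1) ->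
  ELG K p = (n%:R^-1 * \sum_(k < n) \sum_(Z | past k Z == Z) \sum_(b : bool)
    bern (qk Z k + b) (k - qk Z k + ~~ b) p * ln (1 + K Z k * sgnb R b))%:E.
Proof.
move=> Kc K1; have logE_ln X k :
    logE (1 + K X k * sgnb R (X k)) = (ln (1 + K X k * sgnb R (X k)))%:E.
  by rewrite /logE ifT //; have := K1 X k; case: (X k); rewrite /sgnb; lra.
rewrite /ELG; under eq_bigr => X _ do
  rewrite (eq_bigr _ (fun k _ => logE_ln X k)) sumEFin -EFinM.
rewrite sumEFin -EFinM; congr (_ * _)%:E.
under eq_bigr do rewrite mulr_sumr; rewrite exchange_big; apply: eq_bigr => k _.
under eq_bigr => X _ do rewrite -prod_wtE -Kc.
rewrite (sum_wt_past k (fun b Z => ln (1 + K Z k * sgnb R b))).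
apply: eq_bigr => Z _; apply: eq_bigr => b _.
by rewrite prod_wt_past wt_bern.
Qed.

Lemma lint_ELG K : causal K -> (forall X k, -1 < K X k < 1) ->
  lint P (ELG K) = (n%:R^-1 * \sum_(k < n) \sum_(Z | past k Z == Z) stage_gain K k Z)%:E.
Proof.
move=> Kc K1; pose F (k : 'I_n) Z (b : bool) p :=
  bern (qk Z k + b) (k - qk Z k + ~~ b) p * ln (1 + K Z k * sgnb R b).
have iFZ (k : 'I_n) Z : mu.-integrable (P : set T) (EFin \o fun p => \sum_b F k Z b p).
  by apply: integrable_Rsum => // b; exact: integrable_bernM.
have iFk (k : 'I_n) : mu.-integrable (P : set T)
    (EFin \o fun p => \sum_(Z | past k Z == Z) \sum_b F k Z b p).
  exact: integrable_Rsum.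
have iS : mu.-integrable (P : set T)
    (EFin \o fun p => \sum_(k < n) \sum_(Z | past k Z == Z) \sum_b F k Z b p).
  exact: integrable_Rsum.
rewrite (_ : ELG K = EFin \o fun p => n%:R^-1 *
    \sum_(k < n) \sum_(Z | past k Z == Z) \sum_b F k Z b p); last first.
  by apply/funext => p; rewrite ELG_pastE.
have iG : mu.-integrable (P : set T) (EFin \o fun p => n%:R^-1 *
    \sum_(k < n) \sum_(Z | past k Z == Z) \sum_b F k Z b p).
  by apply: eq_integrable (integrableZl mPT n%:R^-1 iS) => // p _; rewrite /= EFinM.
rewrite /lint -EFin_Rintegral //.
rewrite RintegralZl // Rintegral_sum //; congr (_ * _)%:E; apply: eq_bigr => k _.
rewrite Rintegral_sum //; apply: eq_bigr => Z _.
rewrite Rintegral_sum //; last by move=> b; exact: integrable_bernM.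
rewrite big_bool /= !Rintegral_bernM /stage_gain /log_gain /sgnb.
by rewrite !addn0 !addn1 mulr1 mulrN1.
Qed.

Lemma causal_Kstar : causal (@Kstar R n P).
Proof. by move=> X k; rewrite /Kstar qk_past. Qed.

Lemma Kstar_kelly X k : let q := qk X k in
  @Kstar R n P X k = kelly (moment q.+1 (k - q)) (moment q (k - q).+1).
Proof.
move=> q; transitivity (\int[mu]_(p in P) (bern q (k - q) p * (2 * p - 1)) /
              \int[mu]_(p in P) bern q (k - q) p) => //.
rewrite -/(moment q (k - q)) momentD /kelly /moment -RintegralB //;
  try exact: integrable_bern.
by congr (_ / _); apply: eq_Rintegral => p _; rewrite /bern !exprS; ring.
Qed.

Lemma static_kelly : 2 * pbar P - 1 = kelly (moment 1 0) (moment 0 1).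
Proof.
have M10 := moment_gt0 1 0; have M01 := moment_gt0 0 1.
rewrite /pbar moment00 momentD.
transitivity (2 * (moment 1 0 / (moment 1 0 + moment 0 1)) - 1).
  by congr (2 * (_ / _) - 1); apply: eq_Rintegral => p _; rewrite /bern expr1 expr0 mulr1.
by rewrite /kelly; field; rewrite gt_eqF ?addr_gt0.
Qed.

Lemma stage_gain_le_Kstar K (k : 'I_n) Z : -1 < K Z k < 1 ->
  stage_gain K k Z <= stage_gain (@Kstar R n P) k Z.
Proof. by move=> K1; rewrite /stage_gain Kstar_kelly log_gain_le_kelly ?moment_gt0. Qed.

Lemma stage_gain_lt_Kstar K (k : 'I_n) Z : -1 < K Z k < 1 ->
  K Z k != @Kstar R n P Z k ->
  stage_gain K k Z < stage_gain (@Kstar R n P) k Z.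
Proof.
move=> K1; rewrite Kstar_kelly /stage_gain => KZk.
by rewrite Kstar_kelly log_gain_lt_kelly ?moment_gt0.
Qed.

Lemma Kstar_stage1_nonconstant (n1 : (1 < n)%N) :
  @Kstar R n P [ffun i : 'I_n => (i < 1)%N] (Ordinal n1) !=
  @Kstar R n P [ffun=> false] (Ordinal n1).
Proof.
have qk1 : qk [ffun i : 'I_n => (i < 1)%N] (Ordinal n1) = 1%N.
  rewrite /qk card_set_pred -[RHS](card_ord_lt 1 (ltnW n1)).
  by apply: eq_card => i; rewrite !inE ffunE andbb.
have qk0 : qk [ffun=> false] (Ordinal n1) = 0%N.
  by rewrite /qk card_set_pred; apply: eq_card0 => i; rewrite !inE ffunE andbF.
rewrite !Kstar_kelly qk1 qk0 /= eq_kelly ?moment_gt0 //.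
by rewrite -expr2 eq_sym lt_eqF // moment_cauchy_schwarz.
Qed.

Lemma lint_ELG_static_lt_Kstar : (1 < n)%N ->
  (lint P (ELG (@static_ctrl R n (2 * pbar P - 1))) < lint P (ELG (@Kstar R n P)))%E.
Proof.
move=> n1; set c := 2 * pbar P - 1; pose k1 := Ordinal n1.
have c1 : -1 < c < 1 by rewrite /c static_kelly kelly_bounds ?moment_gt0.
have K1 X k : -1 < @Kstar R n P X k < 1 by rewrite Kstar_kelly kelly_bounds ?moment_gt0.
rewrite !lint_ELG //; last exact: causal_Kstar.
rewrite lte_fin ltr_pM2l ?invr_gt0 ?ltr0n ?(ltn_trans _ n1) //.
have [Z pastZ cZ] : exists2 Z, past k1 Z == Z & c != @Kstar R n P Z k1.
  pose Z1 : Defs.path n := [ffun i : 'I_n => (i < 1)%N].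
  pose Z0 : Defs.path n := [ffun=> false].
  have past1 : past k1 Z1 == Z1 by apply/eqP/ffunP => i; rewrite !ffunE andbb.
  have past0 : past k1 Z0 == Z0 by apply/eqP/ffunP => i; rewrite !ffunE andbF.
  have [cZ1|] := eqVneq c (@Kstar R n P Z1 k1); last by exists Z1.
  by exists Z0 => //; rewrite cZ1; exact: Kstar_stage1_nonconstant.
apply: (@ltr_le_sum _ _ xpredT _ _ k1) => // [k _|].
  by apply: ler_sum => Z' _; exact: stage_gain_le_Kstar.
apply: (@ltr_le_sum _ _ (fun Z => past k1 Z == Z) _ _ Z) => // [Z' _|].
  exact: stage_gain_le_Kstar.
exact: stage_gain_lt_Kstar.
Qed.

End growth.

End moments.

Theorem mainTheorem4 (R : realType) (n : nat) (P : set R) :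
  (1 < n)%N ->
  lmeasurable P ->
  P `<=` `[0, 1] ->
  (0 < lmu P)%E ->
  (lint P (ELG (@Kstar R n P)) >
   lint P (ELG (@static_ctrl R n (2 * pbar P - 1))))%E.
Proof. by move=> n1 mP P01 P_gt0; exact: lint_ELG_static_lt_Kstar. Qed.
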